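(* In the two-door cascading memoryless semi-fractional setting, there is an optimal semi-fractional sequence $\pi^\star$ (i.e. $\mathbb{E}[\pi^\star]\le\mathbb{E}[\pi]$ for every semi-fractional sequence $\pi$) of the form $1^s(2\,1^t)^\infty$ for some positive reals $s,t$, and its expected running time is $$\mathbb{E}[\pi^\star]=\min_{z\in[0,1]}\left(\log_{q_1}(1-z)+\frac{c+(1-p_2z)\log_{q_1}(1-p_2z)}{p_2z}\right).$$
   Context: Two cascading memoryless doors with durations: parameters $p_1,p_2\in(0,1)$, $q_1=1-p_1$, $q_2=1-p_2$, and $c>0$. Both doors start closed. A semi-fractional sequence is an infinite alternating sequence of knocks $1^{t_1}\,2\,1^{t_2}\,2\cdots$ with real $t_j\ge0$. A 1-knock $1^t$ takes $t$ time units and, if door 1 is closed, opens it with probability $1-q_1^t$, independently of everything else. A 2-knock takes $c$ time units and opens door 2 with probability $p_2$ (independently) if door 1 is open at that time, and with probability $0$ otherwise. There is no feedback. The running time is the time at which both doors are open, and $\mathbb{E}[\pi]$ is its expectation for sequence $\pi$. $(2\,1^t)^\infty$ denotes infinite repetition. *)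

From HB Require Import structures.
From mathcomp Require Import all_boot all_order all_algebra.
From mathcomp Require Import all_classical all_reals all_analysis.
Set Implicit Arguments. Unset Strict Implicit. Unset Printing Implicit Defensive.
Import Order.TTheory GRing.Theory Num.Theory numFieldNormedType.Exports.
Local Open Scope ring_scope.

Section Doors.
Variable R : realType.

(* A semi-fractional sequence 1^{t_1} 2 1^{t_2} 2 ... is encoded by
   pi : nat -> R with pi j = t_{j+1} (0-indexed); it is admissible when
   every t_j >= 0. *)
Definition semi_fractional (pi : nat -> R) : Prop := forall j, 0 <= pi j.

(* total 1-knock time before the n-th 2-knock (n >= 1): t_1 + ... + t_n *)
Definition Usum (pi : nat -> R) (n : nat) : R := \sum_(i < n) pi i.

(* time at which the n-th 2-knock ends *)
Definition tau (c : R) (pi : nat -> R) (n : nat) : R := Usum pi n + n%:R * c.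

(* P(door 1 still closed after the first n 1-knocks) = q1^(t_1+...+t_n) *)
Definition closed1 (p1 : R) (pi : nat -> R) (n : nat) : R :=
  (1 - p1) `^ (Usum pi n).

(* P(door 1 first found open at the k-th 2-knock), k >= 1 *)
Definition first_open (p1 : R) (pi : nat -> R) (k : nat) : R :=
  closed1 p1 pi k.-1 - closed1 p1 pi k.

(* P(running time = tau n), n >= 1: door 1 first found open at the k-th
   2-knock (1 <= k <= n), 2-knocks k..n-1 fail, 2-knock n succeeds. *)
Definition prob_run (p1 p2 : R) (pi : nat -> R) (n : nat) : R :=
  \sum_(1 <= k < n.+1) first_open p1 pi k * p2 * (1 - p2) ^+ (n - k).

(* P(running time = +oo) = P(door 1 never opens) = lim_n q1^(U n). *)
Definition prob_never (p1 : R) (pi : nat -> R) : R := limn (closed1 p1 pi).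

(* Expected running time E[pi] in the extended reals:
   sum_{n>=1} tau_n P(R = tau_n) + (+oo) * P(R = +oo)  (with +oo * 0 = 0). *)
Definition expected_time (p1 p2 c : R) (pi : nat -> R) : \bar R :=
  ((\sum_(0 <= n <oo) (tau c pi n.+1 * prob_run p1 p2 pi n.+1)%:E)
   + +oo * (prob_never p1 pi)%:E)%E.

Definition periodic_seq (s t : R) : nat -> R := fun j => if j == 0%N then s else t.

Definition logb (q x : R) : R := ln x / ln q.

Definition objective (p1 p2 c z : R) : R :=
  logb (1 - p1) (1 - z)
  + (c + (1 - p2 * z) * logb (1 - p1) (1 - p2 * z)) / (p2 * z).

End Doors.

From HB Require Import structures.
From mathcomp Require Import all_boot all_order all_algebra.
From mathcomp Require Import all_classical all_reals all_analysis.
From mathcomp Require Import ring lra.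
Import Order.TTheory GRing.Theory Num.Theory numFieldNormedType.Exports.
Set Implicit Arguments. Unset Strict Implicit.
Local Open Scope ring_scope.

(* Let A_n be the probability that the doors are not both open when the n-th
   2-knock ends: A_0 = 1, A_(n+1) = (1 - p2) A_n + p2 q1^(t_1 + ... + t_(n+1)),
   and E[pi] = sum_n tau_(n+1) (A_n - A_(n+1)) unless door 1 stays closed with
   positive probability (then E[pi] = +oo).  Let V be the minimum of the
   objective.  Evaluating the objective at z = 1 - q1^(t_1 + ... + t_(n+1)) / A_n
   shows that the potential A_n (V + n c + log_q1 A_n) drops at step n by at most
   tau_(n+1) (A_n - A_(n+1)); telescoping, together with
   log_q1 A_n <= t_1 + ... + t_n, gives E[pi] >= V for every pi.  Conversely, if
   z attains V, the sequence 1^s (2 1^t)^oo with q1^s = 1 - z and q1^t = 1 - p2 z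
   has A_n = (1 - p2 z)^n and partial costs V - A_N (V + N (t + c)) <= V.  A
   minimiser exists since the objective is continuous on (0, 1) and tends to +oo
   at both ends. *)

Section Logb.
Variables (R : realType) (q : R).
Hypotheses (q_gt0 : 0 < q) (q_lt1 : q < 1).

Lemma ln_base_lt0 : ln q < 0.
Proof. by rewrite ln_lt0 // q_gt0. Qed.

Lemma logb_ge0 (x : R) : x <= 1 -> 0 <= logb q x.
Proof.
by move=> x_le1; rewrite /logb mulr_le0 ?ln_le0 // ltW // invr_lt0 ln_base_lt0.
Qed.

Lemma logb_gt0 (x : R) : 0 < x -> x < 1 -> 0 < logb q x.
Proof.
by move=> x_gt0 x_lt1; rewrite /logb nmulr_rgt0 ?ln_lt0 ?x_gt0 // invr_lt0 ln_base_lt0.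
Qed.

Lemma logb_powR (t : R) : logb q (q `^ t) = t.
Proof. by rewrite /logb ln_powR mulfK // ltr0_neq0 // ln_base_lt0. Qed.

Lemma powR_logb (x : R) : 0 < x -> q `^ logb q x = x.
Proof.
move=> x_gt0; rewrite /powR ifF; last by rewrite gt_eqF.
by rewrite /logb mulfVK ?ltr0_neq0 ?ln_base_lt0 // lnK.
Qed.

Lemma logb_div (x y : R) : 0 < x -> 0 < y -> logb q (x / y) = logb q x - logb q y.
Proof. by move=> x_gt0 y_gt0; rewrite /logb ln_div ?posrE // mulrBl. Qed.

Lemma ltr_logb (x y : R) : 0 < x -> x < y -> logb q y < logb q x.
Proof.
move=> x_gt0 xy; have y_gt0 := lt_trans x_gt0 xy.
by rewrite /logb ltr_nM2r ?invr_lt0 ?ln_base_lt0 // ltr_ln ?posrE.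
Qed.

Lemma ler_logb (x y : R) : 0 < x -> x <= y -> logb q y <= logb q x.
Proof.
by move=> x_gt0; rewrite le_eqVlt => /predU1P[-> // | /(ltr_logb x_gt0)/ltW].
Qed.

End Logb.

Lemma periodic_seq_ge0 (R : realType) (s t : R) :
  0 <= s -> 0 <= t -> semi_fractional (periodic_seq s t).
Proof. by move=> s_ge0 t_ge0 [|j]. Qed.

Lemma periodic_seq0 (R : realType) (s t : R) : periodic_seq s t 0 = s.
Proof. by []. Qed.

Lemma periodic_seqS (R : realType) (s t : R) n : periodic_seq s t n.+1 = t.
Proof. by []. Qed.

Section TwoDoors.
Variables (R : realType) (p1 p2 c : R).
Hypotheses (p1_gt0 : 0 < p1) (p1_lt1 : p1 < 1) (p2_gt0 : 0 < p2) (p2_lt1 : p2 < 1).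
Hypothesis c_gt0 : 0 < c.

Local Notation q := (1 - p1).
Local Notation logq := (logb (1 - p1)).
Local Notation objective := (objective p1 p2 c).

Let q_gt0 : 0 < q. Proof. by rewrite subr_gt0. Qed.
Let q_lt1 : q < 1. Proof. by rewrite ltrBlDr ltrDl. Qed.

Lemma objective_ge (z : R) : 0 < z < 1 ->
  c / (p2 * z) <= objective z /\ logq (1 - z) <= objective z.
Proof.
case/andP=> z_gt0 z_lt1.
have pz_gt0 : 0 < p2 * z by rewrite mulr_gt0.
have pz_lt1 : p2 * z < 1 by apply: le_lt_trans z_lt1; rewrite ler_piMl ?ltW.
have log_ge0 : 0 <= logq (1 - z).
  by apply: (logb_ge0 q_gt0 q_lt1); rewrite lerBlDr lerDl ltW.
have log2_ge0 : 0 <= logq (1 - p2 * z).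
  by apply: (logb_ge0 q_gt0 q_lt1); rewrite lerBlDr lerDl ltW.
have rest_ge0 : 0 <= (1 - p2 * z) * logq (1 - p2 * z) / (p2 * z).
  by rewrite divr_ge0 ?(mulr_ge0 _ log2_ge0) ?subr_ge0 ?ltW.
have cost_ge0 : 0 <= c / (p2 * z) by rewrite divr_ge0 ?ltW.
rewrite /objective mulrDl; lra.
Qed.

Lemma objective_ge0 (z : R) : 0 < z < 1 -> 0 <= objective z.
Proof.
move=> z01; have [+ _] := objective_ge z01; apply: le_trans.
by case/andP: z01 => z_gt0 _; rewrite divr_ge0 ?mulr_ge0 ?ltW.
Qed.

Lemma objective_continuous (z : R) : 0 < z < 1 -> {for z, continuous objective}.
Proof.
case/andP=> z_gt0 z_lt1.
have logq_cont (f : R -> R) : {for z, continuous f} -> 0 < f z ->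
    {for z, continuous (fun y => logq (f y))}.
  move=> f_cont fz_gt0; apply: continuousM; last exact: cvg_cst.
  exact: continuous_comp f_cont (continuous_ln fz_gt0).
have lin_cont (b : R) : {for z, continuous (fun y : R => b * y)}.
  by apply: continuousM; [exact: cvg_cst | exact: cvg_id].
have sub_cont (b : R) : {for z, continuous (fun y : R => 1 - b * y)}.
  by apply: continuousB; [exact: cvg_cst | exact: lin_cont].
have pz_lt1 : p2 * z < 1 by apply: le_lt_trans z_lt1; rewrite ler_piMl ?ltW.
rewrite /objective; apply: continuousD.
  apply: logq_cont; last by rewrite subr_gt0.
  by apply: continuousB; [exact: cvg_cst | exact: cvg_id].
apply: continuousM.
  apply: continuousD; first exact: cvg_cst.
  by apply: continuousM; [exact: sub_cont | apply: logq_cont; rewrite ?subr_gt0].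
by apply: continuousV; [rewrite mulf_neq0 ?gt_eqF | exact: lin_cont].
Qed.

Lemma objective_coercive (B : R) : exists a b, [/\ 0 < a, b < 1 &
  forall z, 0 < z < 1 -> (z < a) || (b < z) -> B < objective z].
Proof.
pose B' := `|B| + 1; have B_lt : B < B' by rewrite /B'; have := ler_norm B; lra.
have B'_gt0 : 0 < B' by rewrite /B'; have := normr_ge0 B; lra.
have qB_gt0 : 0 < q `^ B' by rewrite powR_gt0.
exists (c / (p2 * B')), (1 - q `^ B'); split; first by rewrite divr_gt0 ?mulr_gt0.
  by rewrite ltrBlDr ltrDl.
move=> z z01 /orP[z_small | z_big]; apply: (lt_le_trans B_lt).
all: have [cost log] := objective_ge z01.
  apply/ltW/(lt_le_trans _ cost); have /andP[z_gt0 _] := z01.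
  by move: z_small; rewrite !ltr_pdivlMr ?mulr_gt0 //; lra.
apply: le_trans log; apply: ltW; rewrite -{1}(logb_powR q_gt0 q_lt1 B').
by apply: (ltr_logb q_gt0 q_lt1); lra.
Qed.

Lemma objective_has_min :
  exists2 z : R, 0 < z < 1 & forall z' : R, 0 < z' < 1 -> objective z <= objective z'.
Proof.
have half01 : 0 < (2^-1 : R) < 1 by apply/andP; split; lra.
have [a [b [a_gt0 b_lt1 coercive]]] := objective_coercive (objective 2^-1).
have [a_le b_ge] : a <= 2^-1 /\ 2^-1 <= b.
  split; rewrite leNgt; apply/negP => out;
  by have := coercive _ half01; rewrite out ?orbT ltxx => /(_ isT).
have cont : {within `[a, b], continuous objective}%classic.
  apply: continuous_in_subspaceT => y; rewrite inE /= in_itv /= => /andP[ay yb].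
  by apply: objective_continuous; apply/andP; split; lra.
have [z zab zmin] := EVT_min (le_trans a_le b_ge) cont.
move: (zab); rewrite in_itv /= => /andP[az zb].
exists z => [|z' z'01]; first by apply/andP; split; lra.
have [a_le_z' | z'_lt_a] := leP a z'; first have [z'_le_b | b_lt_z'] := leP z' b.
- by apply: zmin; rewrite in_itv /= a_le_z'.
- by apply/ltW/(le_lt_trans (zmin _ _))/coercive; rewrite ?b_lt_z' ?orbT // in_itv /= a_le.
- by apply/ltW/(le_lt_trans (zmin _ _))/coercive; rewrite ?z'_lt_a // in_itv /= a_le.
Qed.

(* At z = 1 - X / A one has 1 - p2 z = A' / A. *)
Lemma objective_rescale (A X A' : R) : 0 < X < A -> A' = (1 - p2) * A + p2 * X ->
  (A - A') * objective (1 - X / A)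
  = (A - A') * logq X + A * c + A' * logq A' - A * logq A.
Proof.
case/andP=> X_gt0 XA ->; have A_gt0 := lt_trans X_gt0 XA.
have A'_gt0 : 0 < (1 - p2) * A + p2 * X by rewrite addr_gt0 ?mulr_gt0 ?subr_gt0.
rewrite /objective.
have -> : 1 - (1 - X / A) = X / A by ring.
have -> : 1 - p2 * (1 - X / A) = ((1 - p2) * A + p2 * X) / A by field; rewrite gt_eqF.
rewrite !logb_div //.
by field; rewrite !gt_eqF ?subr_gt0.
Qed.

Lemma objective_min_step (V A X A' : R) :
  (forall z, 0 < z < 1 -> V <= objective z) ->
  0 < X -> X <= A -> A' = (1 - p2) * A + p2 * X ->
  (A - A') * V <= (A - A') * logq X + A * c + A' * logq A' - A * logq A.
Proof.
move=> Vmin X_gt0 + ->; rewrite le_eqVlt => /predU1P[<- | XA].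
  have -> : (1 - p2) * X + p2 * X = X by ring.
  by rewrite subrr !mul0r !add0r addrK mulr_ge0 ?ltW.
have A_gt0 := lt_trans X_gt0 XA.
rewrite -(objective_rescale _ (erefl _)) ?X_gt0 // ler_wpM2l ?Vmin //.
  by rewrite (_ : A - _ = p2 * (A - X)) ?mulr_ge0 ?subr_ge0 ?ltW //; ring.
apply/andP; split; first by rewrite subr_gt0 ltr_pdivrMr ?mul1r.
by rewrite ltrBlDr ltrDl divr_gt0.
Qed.

Section Survival.
Variable pi : nat -> R.
Hypothesis pi_ge0 : semi_fractional pi.

Local Notation closed1 := (closed1 p1 pi).

Lemma Usum0 : Usum pi 0 = 0.
Proof. by rewrite /Usum big_ord0. Qed.

Lemma UsumS n : Usum pi n.+1 = Usum pi n + pi n.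
Proof. by rewrite /Usum big_ord_recr. Qed.

Lemma Usum_ge0 n : 0 <= Usum pi n.
Proof. by rewrite /Usum sumr_ge0. Qed.

Lemma closed1_0 : closed1 0 = 1.
Proof. by rewrite /closed1 Usum0 powRr0. Qed.

Lemma closed1S n : closed1 n.+1 = closed1 n * q `^ pi n.
Proof. by rewrite /closed1 UsumS powRD // (gt_eqF q_gt0) implybT. Qed.

Lemma closed1_gt0 n : 0 < closed1 n.
Proof. by rewrite powR_gt0. Qed.

Lemma logb_closed1 n : logq (closed1 n) = Usum pi n.
Proof. exact: logb_powR. Qed.

Lemma closed1_nonincreasing : {homo closed1 : n m / (n <= m)%N >-> m <= n}.
Proof.
apply/nonincreasing_seqP => n; rewrite /closed1 UsumS ger_powR ?lerDl //.
by rewrite q_gt0 ltW.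
Qed.

Lemma closed1_cvg : cvgn closed1.
Proof.
apply: nonincreasing_is_cvgn; first exact: closed1_nonincreasing.
by exists 0 => _ [n _ <-]; exact/ltW/closed1_gt0.
Qed.

Lemma prob_never_ge0 : 0 <= prob_never p1 pi.
Proof.
by apply: limr_ge; [exact: closed1_cvg | apply: nearW => n; exact/ltW/closed1_gt0].
Qed.

(* [survival n] is the probability that the doors are not both open when the
   n-th 2-knock ends. *)
Fixpoint survival n : R :=
  if n is m.+1 then (1 - p2) * survival m + p2 * closed1 m.+1 else 1.

Lemma survival0 : survival 0 = 1.
Proof. by []. Qed.

Lemma survivalS n : survival n.+1 = (1 - p2) * survival n + p2 * closed1 n.+1.
Proof. by []. Qed.

Lemma prob_run_survival n : prob_run p1 p2 pi n.+1 = survival n - survival n.+1.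
Proof.
elim: n => [|n IH].
  by rewrite /prob_run big_nat1 subnn expr0 /first_open survivalS survival0 closed1_0; ring.
rewrite /prob_run big_nat_recr //= subnn expr0 mulr1 -/(prob_run _ _ _ _).
rewrite (_ : \sum_(1 <= k < n.+2) _ = (1 - p2) * prob_run p1 p2 pi n.+1).
  by rewrite IH /first_open !survivalS; ring.
rewrite big_distrr /=; apply: eq_big_nat => k /andP[k_ge1 k_le].
by rewrite subSn // exprS; ring.
Qed.

Lemma closed1_le_survival n : closed1 n <= survival n.
Proof.
elim: n => [|n IH]; first by rewrite closed1_0.
have X_le : closed1 n.+1 <= survival n.
  exact: le_trans (closed1_nonincreasing (leqnSn n)) IH.
have q2_ge0 : 0 <= 1 - p2 by rewrite subr_ge0 ltW.
have := ler_wpM2l q2_ge0 X_le.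
rewrite survivalS; lra.
Qed.

Lemma closed1S_le_survival n : closed1 n.+1 <= survival n.
Proof. exact: le_trans (closed1_nonincreasing (leqnSn n)) (closed1_le_survival n). Qed.

Lemma survival_gt0 n : 0 < survival n.
Proof. exact: lt_le_trans (closed1_gt0 n) (closed1_le_survival n). Qed.

Lemma survival_nonincreasing : {homo survival : n m / (n <= m)%N >-> m <= n}.
Proof.
apply/nonincreasing_seqP => n.
have := ler_wpM2l (ltW p2_gt0) (closed1S_le_survival n).
rewrite survivalS; lra.
Qed.

Lemma prob_run_ge0 n : 0 <= prob_run p1 p2 pi n.+1.
Proof. by rewrite prob_run_survival subr_ge0 survival_nonincreasing. Qed.

Lemma survival_cvg0 : (closed1 @ \oo --> 0)%classic -> (survival @ \oo --> 0)%classic.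
Proof.
move=> X_cvg0.
have A_cvg : (survival @ \oo --> limn survival)%classic.
  apply: nonincreasing_is_cvgn; first exact: survival_nonincreasing.
  by exists 0 => _ [n _ <-]; exact/ltW/survival_gt0.
have A_shift : ((fun n => survival n.+1) @ \oo --> (1 - p2) * limn survival + p2 * 0)%classic.
  apply: cvgD; apply: cvgM; try exact: cvg_cst; first exact: A_cvg.
  by move: X_cvg0; rewrite -cvg_shiftS; apply.
have A_shift' : ((fun n => survival n.+1) @ \oo --> limn survival)%classic.
  by move: A_cvg; rewrite -cvg_shiftS; apply.
have lim_fix : limn survival = (1 - p2) * limn survival + p2 * 0.
  by rewrite -(cvg_lim (@Rhausdorff R) A_shift) (cvg_lim (@Rhausdorff R) A_shift').
have /eqP : p2 * limn survival = 0 by move: lim_fix; rewrite mulr0 addr0; lra.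
by rewrite mulf_eq0 gt_eqF //= => /eqP lim0; rewrite -lim0.
Qed.

Lemma logb_survival_le n : logq (survival n) <= Usum pi n.
Proof.
by rewrite -logb_closed1 (ler_logb q_gt0 q_lt1) ?closed1_gt0 ?closed1_le_survival.
Qed.

Lemma tau0 : tau c pi 0 = 0.
Proof. by rewrite /tau Usum0 mul0r addr0. Qed.

Lemma tauS n : tau c pi n.+1 = tau c pi n + pi n + c.
Proof. by rewrite /tau UsumS -natr1; ring. Qed.

Lemma tau_ge0 n : 0 <= tau c pi n.
Proof. by rewrite /tau addr_ge0 ?Usum_ge0 // mulr_ge0 // ltW. Qed.

Lemma tau_nondecreasing : {homo tau c pi : n m / (n <= m)%N >-> n <= m}.
Proof. by apply/nondecreasing_seqP => n; rewrite tauS -addrA lerDl addr_ge0 // ltW. Qed.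

Definition partial_cost N := \sum_(0 <= n < N) tau c pi n.+1 * prob_run p1 p2 pi n.+1.

Lemma partial_costS N :
  partial_cost N.+1 = partial_cost N + tau c pi N.+1 * (survival N - survival N.+1).
Proof. by rewrite /partial_cost big_nat_recr //= prob_run_survival. Qed.

Lemma partial_cost_tail N M : (N <= M)%N ->
  partial_cost N + tau c pi N * (survival N - survival M) <= partial_cost M.
Proof.
move=> /subnKC <-; elim: (M - N)%N => [|d IH]; first by rewrite addn0 subrr mulr0 addr0.
have tau_le : tau c pi N <= tau c pi (N + d).+1 by rewrite tau_nondecreasing // leqW ?leq_addr.
have dA_ge0 : 0 <= survival (N + d) - survival (N + d).+1.
  by rewrite subr_ge0 survival_nonincreasing.
have := ler_wpM2r dA_ge0 tau_le.
rewrite addnS partial_costS; lra.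
Qed.

Section MinimumValue.
Variable V : R.
Hypothesis V_le_objective : forall z, 0 < z < 1 -> V <= objective z.

Definition potential n := survival n * (V + n%:R * c + logq (survival n)).

Lemma potential0 : potential 0 = V.
Proof. by rewrite /potential survival0 /logb ln1 mul0r mul0r !addr0 mul1r. Qed.

Lemma potential_step n :
  potential n - potential n.+1 <= tau c pi n.+1 * (survival n - survival n.+1).
Proof.
have := objective_min_step V_le_objective (closed1_gt0 n.+1) (closed1S_le_survival n)
  (survivalS n).
rewrite logb_closed1 /potential /tau -natr1; lra.
Qed.

Lemma potential_le N : potential N <= survival N * (V + tau c pi N).
Proof.
rewrite /potential /tau ler_wpM2l ?(ltW (survival_gt0 N)) //.
by have := logb_survival_le N; lra.
Qed.

Lemma partial_cost_ge_potential N : V - potential N <= partial_cost N.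
Proof.
elim: N => [|N IH]; first by rewrite potential0 subrr /partial_cost big_geq.
by rewrite partial_costS; have := potential_step N; lra.
Qed.

Lemma partial_cost_lbound N M : (N <= M)%N ->
  V - survival N * V - tau c pi N * survival M <= partial_cost M.
Proof.
move=> NM; have := partial_cost_tail NM; have := partial_cost_ge_potential N.
by have := potential_le N; lra.
Qed.

Lemma expected_time_ge : 0 <= V -> (V%:E <= expected_time p1 p2 c pi)%E.
Proof.
move=> V_ge0; rewrite /expected_time.
set S := (\sum_(0 <= n <oo) _)%E.
have S_ge M : ((partial_cost M)%:E <= S)%E.
  rewrite /partial_cost -sumEFin; apply: nneseries_lim_ge => n _ _.
  by rewrite lee_fin mulr_ge0 ?tau_ge0 ?prob_run_ge0.
have [never_gt0 | never_le0] := ltP 0 (prob_never p1 pi).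
  have S_ge0 : (0 <= S)%E by apply: le_trans (S_ge 0%N); rewrite /partial_cost big_geq.
  by rewrite gt0_mulye ?lte_fin // addey ?leey // gt_eqF // (lt_le_trans ltNy0 S_ge0).
have never0 : prob_never p1 pi = 0 by apply/le_anti; rewrite never_le0 prob_never_ge0.
rewrite never0 mule0 adde0.
have A_cvg0 : (survival @ \oo --> 0)%classic.
  by apply: survival_cvg0; rewrite -never0; exact: closed1_cvg.
have eventually_small (k e : R) : 0 < e ->
    (\forall M \near \oo, `|k * survival M| < e)%classic.
  by apply: (cvgr0Pnorm_lt _).1; rewrite -(mulr0 k); apply: cvgM => //; exact: cvg_cst.
apply/lee_addgt0Pr => e e_gt0.
(* tau N may be large: first make V * A N small, then tau N * A M with M >= N. *)
have [N _ small_N] := eventually_small V (e / 2) (divr_gt0 e_gt0 (ltr0Sn _ 1)).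
have [M0 _ small_M] := eventually_small (tau c pi N) (e / 2) (divr_gt0 e_gt0 (ltr0Sn _ 1)).
pose M := maxn N M0.
apply: le_trans (leeD2r e%:E (S_ge M)); rewrite -EFinD lee_fin.
have := partial_cost_lbound (leq_maxl N M0).
have := le_lt_trans (ler_norm _) (small_N N (leqnn N)).
have := le_lt_trans (ler_norm _) (small_M M (leq_maxr N M0)).
rewrite [V * _]mulrC; lra.
Qed.

End MinimumValue.

End Survival.

Section Periodic.
Variable z : R.
Hypotheses (z_gt0 : 0 < z) (z_lt1 : z < 1).

Local Notation s := (logq (1 - z)).
Local Notation t := (logq (1 - p2 * z)).
Local Notation pistar := (periodic_seq s t).

Let pz_lt1 : p2 * z < 1.
Proof. by apply: le_lt_trans z_lt1; rewrite ler_piMl ?ltW. Qed.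

Lemma periodic_exponents_gt0 : 0 < s /\ 0 < t.
Proof.
by split; apply: (logb_gt0 q_gt0 q_lt1); rewrite ?subr_gt0 ?ltrBlDr ?ltrDl ?mulr_gt0.
Qed.

Lemma periodic_ge0 : semi_fractional pistar.
Proof.
by have [s_gt0 t_gt0] := periodic_exponents_gt0; apply: periodic_seq_ge0; apply: ltW.
Qed.

Lemma closed1_periodic n : closed1 p1 pistar n.+1 = (1 - z) * (1 - p2 * z) ^+ n.
Proof.
elim: n => [|n IH]; rewrite closed1S ?periodic_seq0 ?periodic_seqS ?closed1_0 ?IH.
all: rewrite powR_logb ?subr_gt0 //.
  by rewrite mul1r expr0 mulr1.
by rewrite exprS; ring.
Qed.

Lemma survival_periodic n : survival pistar n = (1 - p2 * z) ^+ n.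
Proof.
elim: n => [|n IH]; first by rewrite survival0 expr0.
by rewrite survivalS IH closed1_periodic exprS; ring.
Qed.

Lemma tau_periodic n : tau c pistar n.+1 = s + n%:R * t + n.+1%:R * c.
Proof.
elim: n => [|n IH]; first by rewrite tauS tau0 periodic_seq0; ring.
by rewrite tauS IH periodic_seqS -!natr1; ring.
Qed.

Lemma partial_cost_periodic N : partial_cost pistar N =
  objective z - (1 - p2 * z) ^+ N * (objective z + N%:R * (t + c)).
Proof.
elim: N => [|N IH]; first by rewrite /partial_cost big_geq // expr0; ring.
rewrite partial_costS IH !survival_periodic tau_periodic exprS /objective -natr1.
by field; rewrite !gt_eqF.
Qed.

Lemma expected_time_periodic_le : (expected_time p1 p2 c pistar <= (objective z)%:E)%E.
Proof.
have r_ge0 : 0 <= 1 - p2 * z by rewrite subr_ge0 ltW.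
have X_cvg0 : (closed1 p1 pistar @ \oo --> 0)%classic.
  rewrite -cvg_shiftS (_ : [sequence _]_n = geometric (1 - z) (1 - p2 * z)).
    by apply: cvg_geometric; rewrite ger0_norm // ltrBlDr ltrDl mulr_gt0.
  by apply/funext => n; rewrite /= closed1_periodic.
rewrite /expected_time /prob_never (cvg_lim (@Rhausdorff R) X_cvg0) mule0 adde0.
apply: lime_le.
  apply: is_cvg_nneseries => n _ _.
  by rewrite lee_fin mulr_ge0 ?(tau_ge0 periodic_ge0) ?(prob_run_ge0 periodic_ge0).
apply: nearW => N; rewrite sumEFin lee_fin -/(partial_cost pistar N).
rewrite partial_cost_periodic gerBl mulr_ge0 ?exprn_ge0 // addr_ge0 ?objective_ge0 ?z_gt0 //.
have [_ t_gt0] := periodic_exponents_gt0.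
by rewrite mulr_ge0 // addr_ge0 ?ltW.
Qed.

End Periodic.

End TwoDoors.

Unset Implicit Arguments.

Theorem mainTheorem14 (R : realType) (p1 p2 c : R) :
  0 < p1 < 1 -> 0 < p2 < 1 -> 0 < c ->
  exists s t : R, 0 < s /\ 0 < t /\
    (forall pi : nat -> R, semi_fractional pi ->
       (expected_time p1 p2 c (periodic_seq s t) <= expected_time p1 p2 c pi)%E) /\
    exists z : R, 0 < z < 1 /\
      expected_time p1 p2 c (periodic_seq s t) = (objective p1 p2 c z)%:E /\
      (forall z' : R, 0 < z' < 1 -> objective p1 p2 c z <= objective p1 p2 c z').
Proof.
move=> /andP[p1_gt0 p1_lt1] /andP[p2_gt0 p2_lt1] c_gt0.
have [z z01 z_min] := objective_has_min p1_gt0 p1_lt1 p2_gt0 p2_lt1 c_gt0.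
have /andP[z_gt0 z_lt1] := z01.
have min_ge0 := objective_ge0 p1_gt0 p1_lt1 p2_gt0 p2_lt1 c_gt0 z01.
have lower pi (pi_ge0 : semi_fractional pi) :=
  expected_time_ge p1_gt0 p1_lt1 p2_gt0 p2_lt1 c_gt0 pi_ge0 z_min min_ge0.
have [s_gt0 t_gt0] := periodic_exponents_gt0 p1_gt0 p1_lt1 p2_gt0 p2_lt1 z_gt0 z_lt1.
have value : expected_time p1 p2 c (periodic_seq (logb (1 - p1) (1 - z))
    (logb (1 - p1) (1 - p2 * z))) = (objective p1 p2 c z)%:E.
  apply/le_anti; rewrite expected_time_periodic_le //= lower //.
  exact (periodic_ge0 p1_gt0 p1_lt1 p2_gt0 p2_lt1 z_gt0 z_lt1).
exists (logb (1 - p1) (1 - z)), (logb (1 - p1) (1 - p2 * z)).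
do 2!split => //; split; first by move=> pi pi_ge0; rewrite value lower.
by exists z.
Qed.
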